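(* Let $C,E\in W^{(l)}\setminus\{0\}$, $m\in\mathbb{N}$ and $(\rho,\sigma)\in\mathfrak V$. If $[C,E]\neq0$, then $[C^m,E]\neq0$ and $\ell_{\rho,\sigma}([C^m,E])=m\,\ell_{\rho,\sigma}(C)^{m-1}\ell_{\rho,\sigma}([C,E])$. Moreover $[C^m,E]_{\rho,\sigma}\neq0$ if and only if $[C,E]_{\rho,\sigma}\neq0$.
   Context: $K$ is a field of characteristic zero, $l\in\mathbb{N}$. $W^{(l)}$ is the associative $K$-algebra with $K$-basis $\{X^{i/l}Y^j:i\in\mathbb{Z},j\in\mathbb{N}_0\}$, powers of $X$ multiplying as Laurent monomials and $[Y,X^\alpha]=\alpha X^{\alpha-1}$ for $\alpha\in\frac1l\mathbb{Z}$. $L^{(l)}=K[x^{\pm1/l},y]$, $\Psi^{(l)}(X^{i/l}Y^j)=x^{i/l}y^j$ ($K$-linear); supports are sets of exponents with nonzero coefficient. $\mathfrak V=\{(\rho,\sigma)\in\mathbb{Z}^2:\gcd(\rho,\sigma)=1,\rho+\sigma>0\}$. For $P\ne0$, $v_{\rho,\sigma}(P)=\max\{\rho a+\sigma b:(a,b)\in\mathrm{Supp}(P)\}$ and $\ell_{\rho,\sigma}(P)\in L^{(l)}$ = sum of terms of $\Psi^{(l)}(P)$ attaining it. $[P,Q]_{\rho,\sigma}:=0$ if $[P,Q]=0$ or $v_{\rho,\sigma}([P,Q])<v_{\rho,\sigma}(P)+v_{\rho,\sigma}(Q)-(\rho+\sigma)$, and $:=\ell_{\rho,\sigma}([P,Q])$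 otherwise. *)

From HB Require Import structures.
From mathcomp Require Import all_boot all_order all_algebra.
From mathcomp Require Import finmap monalg.
Set Implicit Arguments. Unset Strict Implicit. Unset Printing Implicit Defensive.
Import Order.TTheory GRing.Theory Num.Theory.
Local Open Scope ring_scope.

(* Elements of W^(l) (and of L^(l)) are finitely supported K-valued functions
   on the exponent lattice Z x N_0: the pair (i, j) encodes the basis element
   X^(i/l) Y^j of W^(l) (resp. the monomial x^(i/l) y^j of L^(l)).
   Psi^(l) is therefore the identity on the underlying coefficient functions;
   we keep two type names for readability. *)
Definition Wl (K : fieldType) := {malg K[(int * nat)%type]}.
Definition Ll (K : fieldType) := {malg K[(int * nat)%type]}.

Definition Psi (K : fieldType) (P : Wl K) : Ll K := P.

Section Defs.
Variables (K : fieldType) (l : nat).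

Definition ffact (a : int) (i : nat) : K :=
  \prod_(k < i) (a%:~R / l%:R - k%:R).

(* Product in W^(l):  X^(a/l) Y^j * X^(b/l) Y^k
     = sum_(i <= j) C(j,i) (b/l)_i X^((a+b-i l)/l) Y^(j+k-i),
   the normal-ordering formula forced by [Y, X^alpha] = alpha X^(alpha-1). *)
Definition wmul (P Q : Wl K) : Wl K :=
  \sum_(e <- enum_fset (msupp P)) \sum_(f <- enum_fset (msupp Q)) \sum_(i < e.2.+1)
    (P@_e * Q@_f * ('C(e.2, i))%:R * ffact f.1 i) *:
      << ((e.1 + f.1 - (i * l)%:Z)%R, (e.2 + f.2 - i)%N) >>.

Definition wone : Wl K := << ((0%:Z), 0%N) >>.
Definition wpow (P : Wl K) (m : nat) : Wl K := iter m (wmul P) wone.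
Definition wcomm (P Q : Wl K) : Wl K := wmul P Q - wmul Q P.

Definition lmul (P Q : Ll K) : Ll K :=
  \sum_(e <- enum_fset (msupp P)) \sum_(f <- enum_fset (msupp Q))
    (P@_e * Q@_f) *: << ((e.1 + f.1)%R, (e.2 + f.2)%N) >>.
Definition lone : Ll K := << ((0%:Z), 0%N) >>.
Definition lpow (P : Ll K) (m : nat) : Ll K := iter m (lmul P) lone.

Definition wval (rho sigma : int) (e : int * nat) : rat :=
  rho%:~R * (e.1%:~R / l%:R) + sigma%:~R * (e.2)%:R.

(* v_{rho,sigma}(P) = max over the support (meaningful for P != 0) *)
Definition vrs (rho sigma : int) (P : Wl K) : rat :=
  if enum_fset (msupp P) is e0 :: _ then
    \big[Num.max/wval rho sigma e0]_(e <- enum_fset (msupp P)) wval rho sigma e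
  else 0.

Definition lrs (rho sigma : int) (P : Wl K) : Ll K :=
  \sum_(e <- enum_fset (msupp P) | wval rho sigma e == vrs rho sigma P)
    (Psi P)@_e *: << e >>.

Definition brs (rho sigma : int) (P Q : Wl K) : Ll K :=
  if (wcomm P Q == 0) ||
     (vrs rho sigma (wcomm P Q) <
        vrs rho sigma P + vrs rho sigma Q - (rho + sigma)%:~R)
  then 0 else lrs rho sigma (wcomm P Q).

End Defs.

From HB Require Import structures.
From mathcomp Require Import all_boot all_order all_algebra.
From mathcomp Require Import finmap monalg.
From mathcomp Require Import ring lra zify.
Set Implicit Arguments. Unset Strict Implicit. Unset Printing Implicit Defensive.
Import Order.TTheory GRing.Theory Num.Theory.
Local Open Scope ring_scope.

(* Letting X^(a/l) multiply and Y differentiate gives an action of W^(l) on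
   K[x^(+-1/l)], faithful in characteristic 0; so the product of W^(l) is
   associative and [C^(k+1), E] = C [C^k, E] + [C, E] C^k.  As rho + sigma > 0,
   the correction terms of the normal-ordering formula
   Y^j X^b = sum_i C(j, i) (b)_i X^(b - i) Y^(j - i) lose (rho, sigma)-weight,
   so leading forms are multiplicative, and nonzero since L^(l) is a domain.
   Inductively, if l([C^k, E]) = k l(C)^(k-1) l([C, E]), the two summands
   above have the same weight and leading forms k l(C)^k l([C, E]) and
   l(C)^k l([C, E]), whose sum is nonzero in characteristic 0.  Finally
   v([C^m, E]) - v(C^m) = v([C, E]) - v(C), so the inequality defining
   [_, _]_(rho, sigma) reads the same for C^m and for C. *)

Section LinearExtension.
Variables (K : fieldType) (I : choiceType) (V : lmodType K).
Implicit Types (F G : I -> V) (P : {malg K[I]}).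

Definition mlin F P : V := \sum_(e <- msupp P) P@_e *: F e.

Lemma mlinEw F P (S : {fset I}) :
  (msupp P `<=` S)%fset -> mlin F P = \sum_(e <- S) P@_e *: F e.
Proof.
move=> PS; apply: (big_fset_incl _ PS) => e _.
by move/mcoeff_outdom ->; rewrite scale0r.
Qed.

Fact mlin_is_linear F : linear (mlin F).
Proof.
move=> c P Q; set S := (msupp P `|` msupp Q)%fset.
have sPQ : (msupp (c *: P + Q) `<=` S)%fset.
  exact: fsubset_trans (msuppD_le _ _) (fsetSU _ (msuppZ_le _ _)).
rewrite (mlinEw F sPQ) (mlinEw F (fsubsetUl _ _ : (msupp P `<=` S)%fset)).
rewrite (mlinEw F (fsubsetUr _ _ : (msupp Q `<=` S)%fset)) scaler_sumr -big_split.
by apply: eq_bigr => e _; rewrite mcoeffD mcoeffZ scalerDl scalerA.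
Qed.

HB.instance Definition _ F :=
  GRing.isLinear.Build K {malg K[I]} V *:%R (mlin F) (mlin_is_linear F).

Lemma mlinU1 F k : mlin F << k >> = F k.
Proof. by rewrite (mlinEw F msuppU_le) big_seq_fset1 mcoeffUU scale1r. Qed.

Lemma eq_in_mlin F G P : {in msupp P, F =1 G} -> mlin F P = mlin G P.
Proof. by move=> FG; apply: eq_big_seq => e /FG ->. Qed.

Lemma mlinDZ a F G P :
  mlin (fun e => a *: F e + G e) P = a *: mlin F P + mlin G P.
Proof.
rewrite /mlin scaler_sumr -big_split; apply: eq_bigr => e _.
by rewrite scalerDr !scalerA mulrC.
Qed.

End LinearExtension.

Lemma linear_mlin (K : fieldType) (I : choiceType) (V W : lmodType K)
    (f : {linear V -> W}) (F : I -> V) (P : {malg K[I]}) :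
  f (mlin F P) = mlin (f \o F) P.
Proof. by rewrite linear_sum; apply: eq_bigr => e _; rewrite linearZ. Qed.

Section LinearExtensionTheory.
Variables (K : fieldType) (I J : choiceType) (V : lmodType K).

Lemma enum_msupp_neq_nil (P : {malg K[I]}) : P != 0 -> enum_fset (msupp P) != [::].
Proof. by apply: contra => /eqP P0; rewrite [P]monalgE P0 big_nil. Qed.

Lemma big_msupp_single (P : {malg K[I]}) (c : I -> K) g :
  (forall e, e \in msupp P -> e != g -> P@_e * c e = 0) ->
  \sum_(e <- msupp P) P@_e * c e = P@_g * c g.
Proof.
move=> single; have [gP|gNP] := boolP (g \in msupp P).
  rewrite (big_fsetD1 g gP) /= big1_fset ?addr0 // => e.
  by rewrite in_fsetD1 => /andP[? ?] _; apply: single.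
rewrite big1_fset => [|e eP _]; first by rewrite mcoeff_outdom // mul0r.
by apply: single => //; apply: contraNneq gNP => <-.
Qed.

Lemma mlin_mlin (G : J -> V) (F : I -> {malg K[J]}) (P : {malg K[I]}) :
  mlin G (mlin F P) = mlin (fun e => mlin G (F e)) P.
Proof. exact: linear_mlin. Qed.

Lemma mlin_swap (G : I -> J -> V) (P : {malg K[I]}) (Q : {malg K[J]}) :
  mlin (fun e => mlin (G e) Q) P = mlin (fun f => mlin (G^~ f) P) Q.
Proof.
rewrite /mlin (eq_bigr _ (fun e _ => scaler_sumr _ _ _ _)) exchange_big /=.
apply: eq_bigr => f _; rewrite scaler_sumr; apply: eq_bigr => e _.
by rewrite !scalerA mulrC.
Qed.

Lemma mlin_monomials (P : {malg K[I]}) : mlin (fun e => << e >>) P = P.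
Proof.
rewrite [RHS]monalgE; apply: eq_bigr => e _.
by apply/malgP => k; rewrite mcoeffZ !mcoeffU mulr_natr.
Qed.

Lemma mcoeff_mlinEw (F : I -> {malg K[J]}) (P : {malg K[I]}) (S : {fset I}) x :
  (msupp P `<=` S)%fset -> (mlin F P)@_x = \sum_(e <- S) P@_e * (F e)@_x.
Proof.
by move=> PS; rewrite (mlinEw F PS) raddf_sum; apply: eq_bigr => e _; apply: mcoeffZ.
Qed.

Lemma mcoeff_mlin (F : I -> {malg K[J]}) (P : {malg K[I]}) x :
  (mlin F P)@_x = \sum_(e <- msupp P) P@_e * (F e)@_x.
Proof. exact: mcoeff_mlinEw. Qed.

Lemma eq_linear_monomials (f g : {linear {malg K[I]} -> V}) :
  (forall k, f << k >> = g << k >>) -> f =1 g.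
Proof.
move=> fg P; rewrite -(mlin_monomials P) !linear_mlin.
by apply: eq_in_mlin => k _; apply: fg.
Qed.

End LinearExtensionTheory.

Section FallingFactorial.
Variable R : comNzRingType.

Definition falling (y : R) n := \prod_(k < n) (y - k%:R).

Lemma falling0 y : falling y 0 = 1.
Proof. by rewrite /falling big_ord0. Qed.

Lemma fallingS y n : falling y n.+1 = falling y n * (y - n%:R).
Proof. by rewrite /falling big_ord_recr. Qed.

Lemma falling_add y n k :
  falling y (n + k) = falling y n * falling (y - n%:R) k.
Proof.
rewrite /falling big_split_ord /=; congr (_ * _); apply: eq_bigr => i _.
by rewrite natrD opprD addrA.
Qed.

Lemma falling_vandermonde y z n :
  falling (y + z) n = \sum_(i < n.+1) 'C(n, i)%:R * falling y i * falling z (n - i).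
Proof.
elim: n => [|n IH]; first by rewrite big_ord1 /= !falling0 mulr1 mul1r.
have split_term (i : 'I_n.+1) :
    'C(n, i)%:R * falling y i * falling z (n - i) * (y + z - n%:R) =
    'C(n, i)%:R * falling y i.+1 * falling z (n - i)
      + 'C(n, i)%:R * falling y i * falling z (n.+1 - i).
  have le_in : (i <= n)%N by rewrite -ltnS.
  by rewrite fallingS (subSn le_in) fallingS natrB //; ring.
rewrite fallingS IH big_distrl /= (eq_bigr _ (fun i _ => split_term i)) big_split /=.
have shift : \sum_(i < n.+1) 'C(n, i)%:R * falling y i * falling z (n.+1 - i) =
    falling z n.+1 + \sum_(i < n.+1) 'C(n, i.+1)%:R * falling y i.+1 * falling z (n - i).
  have -> : \sum_(i < n.+1) 'C(n, i)%:R * falling y i * falling z (n.+1 - i) =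
      \sum_(i < n.+2) 'C(n, i)%:R * falling y i * falling z (n.+1 - i).
    by rewrite [RHS]big_ord_recr /= bin_small // !mul0r addr0.
  by rewrite big_ord_recl /= bin0 falling0 !mul1r subn0.
rewrite shift [RHS]big_ord_recl /= bin0 falling0 !mul1r subn0 addrCA; congr (_ + _).
rewrite -big_split /=; apply: eq_bigr => i _.
by rewrite binS natrD subSS !mulrDl addrC.
Qed.

End FallingFactorial.

Section WeylAction.
Variables (K : fieldType) (l : nat).
Hypotheses (charK0 : [pchar K] =i pred0) (l_gt0 : (0 < l)%N).

Local Notation ffact := (ffact K l).
Local Notation wmul := (@wmul K l).
Local Notation frac a := (a%:~R / l%:R : K).

Lemma natf_neq0 n : (0 < n)%N -> n%:R != 0 :> K.
Proof. by move=> n_gt0; rewrite (pcharf0P K).1 // -lt0n. Qed.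

Lemma ffactE a n : ffact a n = falling (frac a) n.
Proof. by []. Qed.

Lemma frac_natM j : frac (Posz (j * l)) = j%:R.
Proof.
have -> : (Posz (j * l))%:~R = j%:R * l%:R :> K by rewrite -natrM.
by rewrite mulfK // natf_neq0.
Qed.

(* The basis element X^(a/l) Y^j of W^(l) acts on K[x^(+-1/l)], modelled as
   {malg K[int]} with c standing for x^(c/l): Y^j differentiates j times,
   X^(a/l) multiplies. *)
Definition act (e : int * nat) : {malg K[int]} -> {malg K[int]} :=
  mlin (fun c => ffact c e.2 *: << c + e.1 - (e.2 * l)%:Z >>).

HB.instance Definition _ e := GRing.Linear.on (act e).

Definition wact (P : Wl K) (v : {malg K[int]}) : {malg K[int]} := mlin (act ^~ v) P.

Fact wact_is_linear P : linear (wact P).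
Proof.
move=> a u v; rewrite /wact -mlinDZ; apply: eq_in_mlin => e _ /=.
exact: linearP.
Qed.

HB.instance Definition _ P :=
  GRing.isLinear.Build K {malg K[int]} {malg K[int]} *:%R (wact P) (wact_is_linear P).

Lemma wactB P Q v : wact (P - Q) v = wact P v - wact Q v.
Proof. exact: raddfB. Qed.

Lemma wactD P Q v : wact (P + Q) v = wact P v + wact Q v.
Proof. exact: raddfD. Qed.

Lemma actU e c : act e << c >> = ffact c e.2 *: << c + e.1 - (e.2 * l)%:Z >>.
Proof. exact: mlinU1. Qed.

Definition wmonom_mul (e f : int * nat) : Wl K :=
  \sum_(i < e.2.+1) ('C(e.2, i)%:R * ffact f.1 i) *:
      << ((e.1 + f.1 - (i * l)%:Z)%R, (e.2 + f.2 - i)%N) >>.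

Lemma wmul_mlin P Q : wmul P Q = mlin (fun e => mlin (wmonom_mul e) Q) P.
Proof.
apply: eq_bigr => e _; rewrite scaler_sumr; apply: eq_bigr => f _.
rewrite scalerA scaler_sumr; apply: eq_bigr => i _.
by rewrite !scalerA !mulrA.
Qed.

Lemma ffact_vandermonde e2 f1 f2 c :
  \sum_(i < e2.+1) ('C(e2, i)%:R * ffact f1 i) * ffact c (e2 + f2 - i) =
  ffact c f2 * ffact (c + f1 - (f2 * l)%:Z) e2.
Proof.
have -> : c + f1 - (f2 * l)%:Z = f1 + (c - (f2 * l)%:Z) by rewrite addrAC addrC addrA.
rewrite (ffactE (f1 + _)) intrD mulrDl falling_vandermonde mulr_sumr.
apply: eq_bigr => i _; have le_ie : (i <= e2)%N by rewrite -ltnS.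
rewrite addnC -addnBA // (ffactE c (_ + _)) falling_add.
have -> : frac c - f2%:R = frac (c - (f2 * l)%:Z) by rewrite intrB mulrBl frac_natM.
by rewrite -!ffactE mulrCA mulrA.
Qed.

Lemma wact_wmonom_mul e f v : wact (wmonom_mul e f) v = act e (act f v).
Proof.
apply: (@eq_linear_monomials _ _ _ (wact (wmonom_mul e f)) (act e \o act f)) => c /=.
rewrite /wact /wmonom_mul raddf_sum /=.
under eq_bigr => i _ do rewrite linearZ /= mlinU1 actU scalerA.
rewrite !actU linearZ /= actU scalerA -ffact_vandermonde scaler_suml.
apply: eq_bigr => i _; congr (_ *: << _ >>).
have le_ie : (i * l <= e.2 * l)%N by rewrite leq_mul2r -ltnS ltn_ord orbT.
rewrite mulnBl mulnDl; move: (i * l)%N (e.2 * l)%N (f.2 * l)%N le_ie => a b d; lia.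
Qed.

Lemma wact_mul P Q v : wact (wmul P Q) v = wact P (wact Q v).
Proof.
rewrite wmul_mlin /wact linear_mlin; apply: eq_in_mlin => e _ /=.
rewrite linear_mlin [act e _]linear_mlin; apply: eq_in_mlin => f _ /=.
exact: wact_wmonom_mul.
Qed.

Lemma ffact_natM_lt j n : (j < n)%N -> ffact (Posz (j * l)) n = 0.
Proof.
by move=> lt_jn; rewrite ffactE frac_natM /falling (bigD1 (Ordinal lt_jn)) //= subrr mul0r.
Qed.

Lemma ffact_natM_neq0 j : ffact (Posz (j * l)) j != 0.
Proof.
rewrite ffactE frac_natM /falling; apply/prodf_neq0 => k _.
by rewrite -natrB ?natf_neq0 ?subn_gt0 // ltnW.
Qed.

(* Induction on the Y-degree: evaluating at x^j, the terms of Y-degree above j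
   vanish, those below j are zero by induction, and Y^j x^j = j! != 0. *)
Lemma wact_faithful P : (forall c, wact P << c >> = 0) -> P = 0.
Proof.
move=> P0; apply/malgP => e; rewrite mcoeff0.
suff PY0 j : forall e, e.2 = j -> P@_e = 0 by exact: PY0.
elim/ltn_ind: j => j IH {}e e2j.
have := congr1 (mcoeff e.1) (P0 (Posz (j * l))).
rewrite mcoeff0 mcoeff_mlin (big_msupp_single (g := e)) => [|e' _ e'e].
  rewrite /= actU mcoeffZ mcoeffU e2j addrAC subrr add0r eqxx mulr1n.
  by rewrite mulr1 => /eqP; rewrite mulf_eq0 (negbTE (ffact_natM_neq0 j)) orbF => /eqP.
rewrite /= actU mcoeffZ mcoeffU.
case: (ltngtP e'.2 j) => [lt_e'j|lt_je'|e'2j]; first by rewrite (IH _ lt_e'j e') ?mul0r.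
  by rewrite ffact_natM_lt // mul0r mulr0.
rewrite e'2j addrAC subrr add0r.
have [e'1|] := eqP; last by rewrite mulr0n !mulr0.
by case/eqP: e'e; apply/eqP/andP; rewrite e'1 e'2j e2j.
Qed.

Lemma wact_inj P Q : (forall v, wact P v = wact Q v) -> P = Q.
Proof.
by move=> PQ; apply/subr0_eq/wact_faithful => c; rewrite wactB PQ subrr.
Qed.

Lemma wact1 v : wact (wone K) v = v.
Proof.
rewrite -[in RHS](mlin_monomials v) [LHS]mlinU1; apply: eq_in_mlin => c _ /=.
by rewrite mul0n addr0 subr0 /ffact big_ord0 scale1r.
Qed.

(* [erewrite] matches syntactically; ssreflect's [rewrite] would try to unify
   distinct products up to conversion, unfolding their defining sums, and is
   prohibitively slow here and below. *)
Lemma wact_wcomm P Q v :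
  wact (wcomm l P Q) v = wact P (wact Q v) - wact Q (wact P v).
Proof. by rewrite /wcomm wactB; erewrite !wact_mul. Qed.

Lemma wmulr1 : right_id (wone K) wmul.
Proof. by move=> P; apply: wact_inj => v; rewrite wact_mul wact1. Qed.

Lemma wcomm_wpowS C E k :
  wcomm l (wpow l C k.+1) E =
  wmul C (wcomm l (wpow l C k) E) + wmul (wcomm l C E) (wpow l C k).
Proof.
apply: wact_inj => v; rewrite [wpow l C k.+1]/=.
erewrite wactD, wact_wcomm, !wact_mul, !wact_wcomm.
by rewrite (raddfB (wact C)) addrA subrK.
Qed.
End WeylAction.

Section LeadingForm.
Variables (K : fieldType) (l : nat) (rho sigma : int).
Local Notation w := (wval l rho sigma).
Local Notation vrs := (@vrs K l rho sigma).
Local Notation lrs := (@lrs K l rho sigma).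
Implicit Types P Q R : Wl K.

Lemma wval_le_vrs P e : e \in msupp P -> w e <= vrs P.
Proof.
rewrite /vrs => eP; case: (enum_fset _) (eP : e \in enum_fset (msupp P)) => // e0 s es.
exact: le_bigmax_seq.
Qed.

Lemma vrs_attained P : P != 0 -> exists2 e, e \in msupp P & w e = vrs P.
Proof.
move/enum_msupp_neq_nil; rewrite /vrs.
have memE e : (e \in enum_fset (msupp P)) = (e \in msupp P) by [].
case: (enum_fset _) memE => // e0 s memE _; rewrite big_seq.
apply: (big_ind (fun x => exists2 e, e \in msupp P & w e = x)).
- by exists e0; rewrite -?memE ?mem_head.
- by move=> x y [ex ? <-] [ey ? <-]; rewrite maxEle; case: ifP => _; [exists ey|exists ex].
- by move=> e es; exists e; rewrite -?memE.
Qed.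

Lemma mcoeff_gt_vrs P g : vrs P < w g -> P@_g = 0.
Proof.
move=> lt_vg; apply: mcoeff_outdom; apply: contraTN lt_vg => /wval_le_vrs.
by rewrite leNgt.
Qed.

Lemma mcoeff_lrs P g : (lrs P)@_g = if w g == vrs P then P@_g else 0.
Proof.
rewrite /lrs /Psi raddf_sum /= big_mkcond /=.
rewrite (eq_bigr (fun e => P@_e * (if w e == vrs P then 1 *+ (e == g) else 0))).
  rewrite (big_msupp_single (g := g)) => [|e _ /negbTE ->]; last first.
    by rewrite mulr0n if_same mulr0.
  by rewrite eqxx mulr1n; case: ifP => _; rewrite ?mulr1 ?mulr0.
by move=> e _; case: ifP => _; rewrite ?mulr0 // mcoeffZ mcoeffU.
Qed.

Lemma mcoeff_lrs_at P g : w g = vrs P -> (lrs P)@_g = P@_g.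
Proof. by move=> wg; rewrite mcoeff_lrs wg eqxx. Qed.

Lemma lrs_neq0 P : P != 0 -> lrs P != 0.
Proof.
case/vrs_attained => e eP wev; apply: contraTneq eP => P0.
by rewrite -mcoeff_neq0 -(mcoeff_lrs_at wev) P0 mcoeff0 eqxx.
Qed.

Lemma lrs_charact R (T : Ll K) w0 :
  T != 0 -> (forall g, w g != w0 -> T@_g = 0) ->
  (forall g, w0 < w g -> R@_g = 0) -> (forall g, w g = w0 -> R@_g = T@_g) ->
  [/\ R != 0, vrs R = w0 & lrs R = T].
Proof.
move=> T0 homT R_above R_at.
have [g gT _] := vrs_attained T0; rewrite -mcoeff_neq0 in gT.
have wg : w g = w0 by apply/eqP; apply: contraNT gT => /homT ->.
have R0 : R != 0 by apply: contraNneq gT => R0; rewrite -R_at // R0 mcoeff0.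
have vR : vrs R = w0.
  have [e eR we] := vrs_attained R0; apply/eqP; rewrite eq_le; apply/andP; split.
    rewrite -we leNgt; apply: contraTN eR => /R_above Re0.
    by rewrite -mcoeff_eq0 Re0.
  by rewrite -wg wval_le_vrs // -mcoeff_neq0 R_at.
split=> //; apply/malgP => x; rewrite mcoeff_lrs vR.
by case: eqP => [/R_at //|/eqP /homT ->].
Qed.

Lemma lrsD P Q : vrs P = vrs Q -> lrs P + lrs Q != 0 ->
  [/\ P + Q != 0, vrs (P + Q) = vrs P & lrs (P + Q) = lrs P + lrs Q].
Proof.
move=> vPQ sum0; apply: lrs_charact => // g.
- by erewrite mcoeffD, !mcoeff_lrs; rewrite -vPQ => /negbTE ->; rewrite addr0.
- by move=> vg; rewrite mcoeffD !mcoeff_gt_vrs -?vPQ ?addr0.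
- by move=> wg; erewrite !mcoeffD, !mcoeff_lrs_at; rewrite // wg.
Qed.

End LeadingForm.

Definition eadd (e f : int * nat) : int * nat := ((e.1 + f.1)%R, (e.2 + f.2)%N).

Lemma eaddC : commutative eadd.
Proof. by move=> e f; rewrite /eadd addrC addnC. Qed.

Lemma eaddA : associative eadd.
Proof. by move=> e f g; rewrite /eadd /= addrA addnA. Qed.

Section LaurentProduct.
Variable K : fieldType.
Implicit Types A B D : Ll K.

Lemma lmul_mlin A B : lmul A B = mlin (fun e => mlin (fun f => << eadd e f >>) B) A.
Proof.
apply: eq_bigr => e _; rewrite scaler_sumr; apply: eq_bigr => f _.
by rewrite scalerA.
Qed.

Lemma lmulC : commutative (@lmul K).
Proof.
move=> A B; erewrite !lmul_mlin, mlin_swap.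
by apply: eq_in_mlin => f _; apply: eq_in_mlin => e _; rewrite eaddC.
Qed.

Lemma lmulA : associative (@lmul K).
Proof.
move=> A B D; erewrite !lmul_mlin, mlin_mlin; apply: eq_in_mlin => e _ /=.
erewrite !mlin_mlin; apply: eq_in_mlin => f _ /=.
by rewrite mlinU1; erewrite mlin_mlin; apply: eq_in_mlin => g _; rewrite /= mlinU1 eaddA.
Qed.

Lemma lmulZr c A B : lmul A (c *: B) = c *: lmul A B.
Proof. by rewrite [LHS]lmulC [in RHS]lmulC; erewrite !lmul_mlin; rewrite linearZ. Qed.

Lemma lmul1 A : lmul (lone K) A = A.
Proof.
rewrite lmul_mlin mlinU1 -[RHS]mlin_monomials; apply: eq_in_mlin => -[a b] _.
by rewrite /eadd /= add0r.
Qed.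

Lemma mcoeff_lmulEw A B (SA SB : {fset int * nat}) g :
  (msupp A `<=` SA)%fset -> (msupp B `<=` SB)%fset ->
  (lmul A B)@_g = \sum_(e <- SA) A@_e * \sum_(f <- SB) B@_f * (eadd e f == g)%:R.
Proof.
move=> sA sB; rewrite lmul_mlin (mcoeff_mlinEw _ _ sA); apply: eq_bigr => e _.
rewrite (mcoeff_mlinEw _ _ sB); congr (_ * _); apply: eq_bigr => f _.
by rewrite mcoeffU.
Qed.

Lemma mcoeff_lmul A B g :
  (lmul A B)@_g =
  \sum_(e <- msupp A) A@_e * \sum_(f <- msupp B) B@_f * (eadd e f == g)%:R.
Proof. exact: mcoeff_lmulEw. Qed.

Definition lexle (e a : int * nat) := (e.1 < a.1) || ((e.1 == a.1) && (e.2 <= a.2)%N).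

Lemma lexle_refl e : lexle e e.
Proof. by rewrite /lexle eqxx leqnn orbT. Qed.

Lemma exists_lexmax (s : seq (int * nat)) : s != [::] ->
  exists2 a, a \in s & forall e, e \in s -> lexle e a.
Proof.
elim: s => // x [|y s] IH _.
  by exists x; rewrite ?mem_head // => e; rewrite inE => /eqP ->; apply: lexle_refl.
have [a a_ys a_max] := IH isT; have [x_le_a|a_lt_x] := boolP (lexle x a).
  by exists a => [|e]; rewrite inE ?a_ys ?orbT // => /orP[/eqP->|/a_max].
exists x => [|e]; first exact: mem_head.
rewrite inE => /orP[/eqP->|/a_max]; first exact: lexle_refl.
by move: a_lt_x; rewrite /lexle; lia.
Qed.

Lemma lexle_eadd_eq e f a b :
  lexle e a -> lexle f b -> eadd e f = eadd a b -> e = a /\ f = b.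
Proof.
case: e a f b => [e1 e2] [a1 a2] [f1 f2] [b1 b2]; rewrite /lexle /eadd /= => ea fb [s1 s2].
by have [-> -> -> ->] : [/\ e1 = a1, e2 = a2, f1 = b1 & f2 = b2] by split; lia.
Qed.

(* The coefficient of the product at the sum of the lexicographically largest
   exponents of A and B is the product of the corresponding coefficients. *)
Lemma lmul_neq0 A B : A != 0 -> B != 0 -> lmul A B != 0.
Proof.
move=> /enum_msupp_neq_nil /exists_lexmax [a aA a_max].
move=> /enum_msupp_neq_nil /exists_lexmax [b bB b_max].
apply/eqP => /(congr1 (mcoeff (eadd a b))) /eqP.
rewrite mcoeff0 mcoeff_lmul (big_msupp_single (g := a)) => [|e eA ea]; last first.
  rewrite big1_seq ?mulr0 // => f /andP[_ fB]; case: eqP => [|_]; last by rewrite mulr0.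
  by case/(lexle_eadd_eq (a_max e eA) (b_max f fB)) => /eqP; rewrite (negbTE ea).
rewrite (big_msupp_single (g := b)) => [|f fB fb]; last first.
  case: eqP => [|_]; last by rewrite mulr0.
  by case/(lexle_eadd_eq (lexle_refl a) (b_max f fB)) => _ /eqP; rewrite (negbTE fb).
by rewrite eqxx mulr1 mulf_eq0 !mcoeff_eq0 aA bB.
Qed.

End LaurentProduct.

Section LeadingFormProduct.
Variables (K : fieldType) (l : nat) (rho sigma : int).
Hypotheses (l_gt0 : (0 < l)%N) (rs_gt0 : 0 < rho + sigma).
Local Notation w := (wval l rho sigma).
Local Notation vrs := (@vrs K l rho sigma).
Local Notation lrs := (@lrs K l rho sigma).
Implicit Types P Q : Wl K.

Definition wmul_exp (e f : int * nat) (i : nat) : int * nat :=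
  ((e.1 + f.1 - (i * l)%:Z)%R, (e.2 + f.2 - i)%N).

Lemma wmul_exp0 e f : wmul_exp e f 0 = eadd e f.
Proof. by rewrite /wmul_exp /eadd mul0n subr0 subn0. Qed.

Lemma wval_eadd e f : w (eadd e f) = w e + w f.
Proof.
have l0 : l%:R != 0 :> rat by rewrite pnatr_eq0 -lt0n.
by rewrite /wval /eadd /= rmorphD natrD /=; field.
Qed.

Lemma wval_wmul_exp e f i : (i <= e.2)%N ->
  w (wmul_exp e f i) = w e + w f - i%:R * (rho + sigma)%:~R.
Proof.
move=> le_ie; have l0 : l%:R != 0 :> rat by rewrite pnatr_eq0 -lt0n.
rewrite /wval /wmul_exp /= !rmorphB !rmorphD /= natrB ?natrD; last first.
  exact: leq_trans le_ie (leq_addr _ _).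
have -> : (Posz (i * l))%:~R = i%:R * l%:R :> rat by rewrite -natrM.
by field.
Qed.

Lemma wmul_exp_top P Q e f i g :
  e \in msupp P -> f \in msupp Q -> (i <= e.2)%N ->
  vrs P + vrs Q <= w g -> wmul_exp e f i = g ->
  [/\ i = 0%N, w e = vrs P, w f = vrs Q & w g = vrs P + vrs Q].
Proof.
move=> eP fQ le_ie le_g gE; subst g; rewrite wval_wmul_exp // in le_g *.
have we := wval_le_vrs l rho sigma eP; have wf := wval_le_vrs l rho sigma fQ.
have [i0|i_gt0] := posnP i; first by rewrite i0 mul0r subr0 in le_g *; split => //; lra.
have : 0 < i%:R * (rho + sigma)%:~R :> rat by rewrite mulr_gt0 ?ltr0n ?ltr0z.
by move: le_g; move: (_ * _) => x le_g x_gt0; exfalso; lra.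
Qed.

Lemma mcoeff_wmul P Q g :
  (wmul l P Q)@_g =
  \sum_(e <- msupp P) P@_e * \sum_(f <- msupp Q) Q@_f *
    \sum_(i < e.2.+1) ('C(e.2, i)%:R * ffact K l f.1 i) * (wmul_exp e f i == g)%:R.
Proof.
rewrite wmul_mlin mcoeff_mlin; apply: eq_bigr => e _; rewrite mcoeff_mlin.
congr (_ * _); apply: eq_bigr => f _; congr (_ * _).
rewrite raddf_sum; apply: eq_bigr => i _.
by apply: etrans (mcoeffZ _ _ _) _; rewrite mcoeffU.
Qed.

Lemma sum_wmul_exp_eq0 e f g :
  (forall i, (i <= e.2)%N -> wmul_exp e f i != g) ->
  \sum_(i < e.2.+1) ('C(e.2, i)%:R * ffact K l f.1 i) * (wmul_exp e f i == g)%:R = 0.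
Proof.
by move=> neq; apply: big1 => i _; rewrite (negbTE (neq i _)) ?mulr0 // -ltnS.
Qed.

Lemma sum_wmul_exp_top e f g :
  (forall i, (0 < i <= e.2)%N -> wmul_exp e f i != g) ->
  \sum_(i < e.2.+1) ('C(e.2, i)%:R * ffact K l f.1 i) * (wmul_exp e f i == g)%:R =
  (eadd e f == g)%:R.
Proof.
move=> neq; rewrite big_ord_recl big1 => [|i _]; last first.
  by rewrite (negbTE (neq i.+1 _)) ?mulr0 //= -ltnS.
by rewrite bin0 /ffact big_ord0 !mul1r addr0 wmul_exp0.
Qed.

Lemma msupp_lrs P : (msupp (lrs P) `<=` msupp P)%fset.
Proof.
by apply/fsubsetP => e; rewrite -!mcoeff_neq0 mcoeff_lrs; case: ifP; rewrite ?eqxx.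
Qed.

Lemma wval_msupp_lrs P e : e \in msupp (lrs P) -> w e = vrs P.
Proof. by rewrite -mcoeff_neq0 mcoeff_lrs; case: (w e =P vrs P) => // _; rewrite eqxx. Qed.

Lemma wmul_lead P Q : P != 0 -> Q != 0 ->
  [/\ wmul l P Q != 0, vrs (wmul l P Q) = vrs P + vrs Q
    & lrs (wmul l P Q) = lmul (lrs P) (lrs Q)].
Proof.
move=> P0 Q0; apply: lrs_charact; first by rewrite lmul_neq0 ?lrs_neq0.
- move=> g; rewrite mcoeff_lmul => wg.
  rewrite big1_seq // => e /andP[_ eP]; rewrite big1_seq ?mulr0 // => f /andP[_ fQ].
  case: eqP => [efg|_]; last by rewrite mulr0.
  by move: wg; rewrite -efg wval_eadd (wval_msupp_lrs eP) (wval_msupp_lrs fQ) eqxx.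
- move=> g vg; rewrite mcoeff_wmul big1_seq // => e /andP[_ eP].
  rewrite big1_seq ?mulr0 // => f /andP[_ fQ].
  rewrite sum_wmul_exp_eq0 ?mulr0 // => i le_ie.
  apply/eqP => egi; have [_ _ _ wg] := wmul_exp_top eP fQ le_ie (ltW vg) egi.
  by move: vg; rewrite wg ltxx.
move=> g wg; have le_g : vrs P + vrs Q <= w g by rewrite wg.
rewrite mcoeff_wmul (mcoeff_lmulEw g (msupp_lrs P) (msupp_lrs Q)).
apply: eq_big_seq => e eP; have [we|we] := eqVneq (w e) (vrs P); last first.
  rewrite mcoeff_lrs (negbTE we) mul0r big1_seq ?mulr0 // => f /andP[_ fQ].
  rewrite sum_wmul_exp_eq0 ?mulr0 // => i le_ie; apply/eqP => egi.
  by have [_ /eqP] := wmul_exp_top eP fQ le_ie le_g egi; rewrite (negbTE we).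
rewrite mcoeff_lrs_at //; congr (_ * _); apply: eq_big_seq => f fQ.
have [wf|wf] := eqVneq (w f) (vrs Q); last first.
  rewrite mcoeff_lrs (negbTE wf) mul0r sum_wmul_exp_eq0 ?mulr0 // => i le_ie.
  apply/eqP => egi.
  by have [_ _ /eqP] := wmul_exp_top eP fQ le_ie le_g egi; rewrite (negbTE wf).
rewrite mcoeff_lrs_at // sum_wmul_exp_top // => i /andP[i_gt0 le_ie]; apply/eqP => egi.
by have [i0] := wmul_exp_top eP fQ le_ie le_g egi; rewrite i0 in i_gt0.
Qed.

End LeadingFormProduct.

Section PowerCommutator.
Variables (K : fieldType) (l : nat) (rho sigma : int).
Hypotheses (charK0 : [pchar K] =i pred0) (l_gt0 : (0 < l)%N) (rs_gt0 : 0 < rho + sigma).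
Local Notation w := (wval l rho sigma).
Local Notation vrs := (@vrs K l rho sigma).
Local Notation lrs := (@lrs K l rho sigma).
Variables (C E : Wl K).
Hypothesis C0 : C != 0.

Lemma wone_lead : [/\ wone K != 0, vrs (wone K) = 0 & lrs (wone K) = lone K].
Proof.
have w00 : w (0, 0%N) = 0 by rewrite /wval /= mul0r !mulr0 addr0.
apply: lrs_charact => [|g|g|//]; first by rewrite monalgU_eq0 oner_eq0.
  by rewrite mcoeffU; have [<-|] := eqVneq (0%:Z, 0%N) g; rewrite ?w00 ?eqxx.
by rewrite mcoeffU; have [<-|] := eqVneq (0%:Z, 0%N) g; rewrite ?w00 ?ltxx.
Qed.

Lemma wpow_lead k :
  [/\ wpow l C k != 0, vrs (wpow l C k) = k%:R * vrs C & lrs (wpow l C k) = lpow (lrs C) k].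
Proof.
elim: k => [|k [Ck0 vCk lCk]]; first by rewrite mul0r; apply: wone_lead.
have [CCk0 vCCk lCCk] := wmul_lead l_gt0 rs_gt0 C0 Ck0.
rewrite -[wpow l C k.+1]/(wmul l C (wpow l C k)).
rewrite -[lpow _ k.+1]/(lmul (lrs C) (lpow (lrs C) k)).
erewrite vCCk, lCCk, vCk, lCk.
by rewrite -[k.+1]addn1 natrD mulrDl mul1r addrC.
Qed.

Hypothesis CE0 : wcomm l C E != 0.

Lemma wcomm_wpow_lead k :
  [/\ wcomm l (wpow l C k.+1) E != 0,
      vrs (wcomm l (wpow l C k.+1) E) = k%:R * vrs C + vrs (wcomm l C E)
    & lrs (wcomm l (wpow l C k.+1) E) =
        k.+1%:R *: lmul (lpow (lrs C) k) (lrs (wcomm l C E))].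
Proof.
elim: k => [|k [Ek0 vEk lEk]].
  have -> : wpow l C 1 = C by apply: wmulr1.
  by rewrite mul0r add0r scale1r lmul1.
have [Ck0 vCk lCk] := wpow_lead k.+1.
have [X0 vX lX] := wmul_lead l_gt0 rs_gt0 C0 Ek0.
have [Y0 vY lY] := wmul_lead l_gt0 rs_gt0 CE0 Ck0.
have vXY : vrs (wmul l C (wcomm l (wpow l C k.+1) E)) =
           vrs (wmul l (wcomm l C E) (wpow l C k.+1)).
  by erewrite vX, vY, vEk, vCk; ring.
have lXY : lrs (wmul l C (wcomm l (wpow l C k.+1) E)) +
           lrs (wmul l (wcomm l C E) (wpow l C k.+1)) =
           k.+2%:R *: lmul (lpow (lrs C) k.+1) (lrs (wcomm l C E)).
  erewrite lX, lY, lEk, lCk, lmulZr, (lmulA (lrs C)).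
  erewrite (lmulC (lrs (wcomm l C E)) (lpow (lrs C) k.+1)).
  by rewrite -[k.+2]addn1 natrD scalerDl scale1r.
have lXY0 : k.+2%:R *: lmul (lpow (lrs C) k.+1) (lrs (wcomm l C E)) != 0.
  rewrite scaler_eq0 negb_or; apply/andP; split; first by rewrite (pcharf0P K).1.
  by apply: lmul_neq0; [rewrite -lCk|]; apply: lrs_neq0.
rewrite -lXY in lXY0; have [S0 vS lS] := lrsD vXY lXY0.
rewrite (wcomm_wpowS charK0 l_gt0 C E k.+1).
split; [exact: S0 | apply: (etrans vS) | exact: (etrans lS lXY)].
by erewrite vX, vEk; ring.
Qed.

End PowerCommutator.

Lemma brs_neq0 (K : fieldType) l rho sigma (P Q : Wl K) : wcomm l P Q != 0 ->
  (brs l rho sigma P Q != 0) =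
  ~~ (vrs l rho sigma (wcomm l P Q) <
        vrs l rho sigma P + vrs l rho sigma Q - (rho + sigma)%:~R).
Proof.
by move=> PQ0; rewrite /brs (negbTE PQ0) /=; case: ifP; rewrite ?eqxx ?lrs_neq0.
Qed.

Theorem lemma2p13 (K : fieldType) (charK0 : [pchar K] =i pred0)
  (l : nat) (hl : (0 < l)%N) (C E : Wl K) (m : nat) (hm : (0 < m)%N)
  (rho sigma : int) (hgcd : gcdz rho sigma = 1%N) (hpos : 0 < rho + sigma) :
  C != 0 -> E != 0 -> wcomm l C E != 0 ->
  [/\ wcomm l (wpow l C m) E != 0,
      lrs l rho sigma (wcomm l (wpow l C m) E)
        = m%:R *: lmul (lpow (lrs l rho sigma C) m.-1)
                       (lrs l rho sigma (wcomm l C E))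
    & (brs l rho sigma (wpow l C m) E != 0 <-> brs l rho sigma C E != 0)].
Proof.
move=> C0 _ CE0; case: m hm => [//|k _].
have [CkE0 vCkE lCkE] := wcomm_wpow_lead charK0 hl hpos C0 CE0 k.
have [_ vCk _] := wpow_lead hl hpos C0 k.+1.
split; [exact: CkE0 | exact: lCkE |].
erewrite (brs_neq0 rho sigma CkE0), (brs_neq0 rho sigma CE0), vCkE, vCk.
set s := (rho + sigma)%:~R; set vC := vrs l rho sigma C; set vE := vrs l rho sigma E.
have -> : k.+1%:R * vC + vE - s = k%:R * vC + (vC + vE - s) by ring.
by rewrite ltrD2l.
Qed.
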